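(* Let $I\subseteq R$ be a good ideal and $a_1,\dots,a_n\in\mathbb N$, and put $l=a_1+\dots+a_n+1$. Then $I_{a_1,\dots,a_n}=I^l:\langle\mu_1^{a_1}\cdots\mu_n^{a_n}\rangle$.
   Context: Let $\mathbb K$ be a field, $R=\mathbb K[x_1,\dots,x_n]$, $\mathfrak m=\langle x_1,\dots,x_n\rangle$, $\mathbb N=\{0,1,2,\dots\}$. A monomial $x_1^{\alpha_1}\cdots x_n^{\alpha_n}$ is identified with the point $(\alpha_1,\dots,\alpha_n)\in\mathbb N^n$. For a monomial ideal $I$, $G(I)$ denotes its (unique) minimal monomial generating set. If $I$ is an $\mathfrak m$-primary monomial ideal, then for each $i$ there is a unique $d_i\ge1$ with $x_i^{d_i}\in G(I)$; write $\mu_i=x_i^{d_i}$. For $(a_1,\dots,a_n)\in\mathbb N^n$ the box associated to $I$ is $B_{a_1,\dots,a_n}=([a_1d_1,(a_1+1)d_1]\times\cdots\times[a_nd_n,(a_n+1)d_n])\cap\mathbb N^n$; a monomial belongs to a box if its exponent vector does. An $\mathfrak m$-primary monomial ideal $I$ is called good if for every integer $l\ge1$, every element of $G(I^l)$ belongs to some box $B_{a_1,\dots,a_n}$ with $a_1+\dots+a_n=l-1$. For a good ideal $I$ and $a=(a_1,\dots,a_n)\in\mathbb N^n$, with $l=a_1+\dots+a_n+1$, define $I_{a_1,\dots,a_n}=\left\langle \frac{m}{\mu_1^{a_1}\cdots\mu_n^{a_n}} : m\in B_{a_1,\dots,a_n}\cap G(I^l)\right\rangle$ (every monomial in $B_{a_1,\dots,a_n}$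 is divisible by $\mu_1^{a_1}\cdots\mu_n^{a_n}$). *)

From mathcomp Require Import all_boot.
Set Implicit Arguments. Unset Strict Implicit. Unset Printing Implicit Defensive.

(* A monomial x_1^e_1 ... x_n^e_n is its exponent vector e : 'I_n -> nat. *)
Definition mon (n : nat) := {ffun 'I_n -> nat}.

Definition mon1 (n : nat) : mon n := [ffun _ => 0].
Definition mmul n (u v : mon n) : mon n := [ffun i => u i + v i].
(* exact quotient u / v (only used when v divides u) *)
Definition mdiv n (u v : mon n) : mon n := [ffun i => u i - v i].
Definition mdvd n (v u : mon n) : bool := [forall i, v i <= u i].
Definition xpow n (i : 'I_n) (k : nat) : mon n := [ffun j => if j == i then k else 0].
(* prod_i mu_i^{a_i} with mu_i = x_i^{d_i} *)
Definition mupow n (d a : mon n) : mon n := [ffun i => a i * d i].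

(* A monomial ideal is given by a finite list S of monomial generators;
   its monomials are those divisible by some generator. *)
Definition in_mideal n (S : seq (mon n)) (m : mon n) : bool :=
  has (fun g => mdvd g m) S.

Fixpoint gpow n (S : seq (mon n)) (l : nat) : seq (mon n) :=
  match l with
  | 0 => [:: mon1 n]
  | l'.+1 => [seq mmul g h | g <- S, h <- gpow S l']
  end.

Definition mingens n (S : seq (mon n)) : seq (mon n) :=
  [seq m <- undup S | ~~ has (fun s => (s != m) && mdvd s m) S].

Definition in_box n (d a m : mon n) : bool :=
  [forall i, (a i * d i <= m i) && (m i <= (a i).+1 * d i)].

Definition deg n (a : mon n) : nat := \sum_(i < n) a i.

(* d_i is the (unique) exponent with x_i^{d_i} in G(I), d_i >= 1;
   existence of such d for all i is exactly m-primariness. *)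
Definition pure_powers n (S : seq (mon n)) (d : mon n) : Prop :=
  forall i : 'I_n, 0 < d i /\ xpow i (d i) \in mingens S.

Definition good n (S : seq (mon n)) (d : mon n) : Prop :=
  pure_powers S d /\
  forall l : nat, 1 <= l ->
    forall m, m \in mingens (gpow S l) ->
      exists a : mon n, deg a = l.-1 /\ in_box d a m.

Definition Ia_gens n (S : seq (mon n)) (d a : mon n) : seq (mon n) :=
  [seq mdiv m (mupow d a) | m <- mingens (gpow S (deg a).+1) & in_box d a m].

From mathcomp Require Import all_boot.
From mathcomp Require Import zify.
Set Implicit Arguments. Unset Strict Implicit. Unset Printing Implicit Defensive.

(* Weigh x_i by 1/d_i (scaled by D = d_1 ... d_n), so that mu^c has weight
   D * deg c.  Goodness forces every generator of I to weigh at least D, hence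
   every element of G(I^l) weighs at least l * D, and mu^c is then a minimal
   generator of I^(deg c).  If m * mu^a lies in I^l, some p in G(I^l) divides
   it, and p lies in a box B_b with deg b = deg a.  For b = a, p / mu^a is a
   generator of I_a dividing m.  Otherwise a_i < b_i for some i, and the
   minimal generator mu^a * x_i^(d_i), which lies in B_a, still divides
   m * mu^a, so x_i^(d_i) is a generator of I_a dividing m. *)

Section Monomials.
Variable n : nat.
Implicit Types (u v m : mon n) (T : seq (mon n)).

Lemma mdvdP u v : reflect (forall i, u i <= v i) (mdvd u v).
Proof. exact: forallP. Qed.

Lemma mdvd_trans : transitive (@mdvd n).
Proof.
by move=> v u w /mdvdP uv /mdvdP vw; apply/mdvdP => i; apply: leq_trans (uv i) (vw i).
Qed.

Lemma mmulC u v : mmul u v = mmul v u.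
Proof. by apply/ffunP => i; rewrite !ffunE addnC. Qed.

Lemma mdivK u v : mdvd v u -> mmul (mdiv u v) v = u.
Proof. by move=> /mdvdP vu; apply/ffunP => i; rewrite !ffunE subnK. Qed.

Lemma mdvd_mdivl u v m : mdvd (mdiv u v) m = mdvd u (mmul m v).
Proof.
by apply/mdvdP/mdvdP => dvd i; have := dvd i; rewrite !ffunE leq_subLR addnC.
Qed.

Lemma deg_mmul u v : deg (mmul u v) = deg u + deg v.
Proof. by rewrite /deg -big_split; apply: eq_bigr => i _; rewrite ffunE. Qed.

Lemma deg_xpow (i : 'I_n) k : deg (xpow i k) = k.
Proof.
rewrite /deg (bigD1 i) //= big1 => [|j /negbTE j_neq_i]; last by rewrite ffunE j_neq_i.
by rewrite ffunE eqxx addn0.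
Qed.

Lemma mupow_mmul d u v : mupow d (mmul u v) = mmul (mupow d u) (mupow d v).
Proof. by apply/ffunP => i; rewrite !ffunE mulnDl. Qed.

Lemma mupow_xpow d (i : 'I_n) k : mupow d (xpow i k) = xpow i (k * d i).
Proof. by apply/ffunP => j; rewrite !ffunE; case: eqP => [->|]. Qed.

Definition wdeg (w : 'I_n -> nat) u : nat := \sum_i u i * w i.

Lemma wdeg_mmul w u v : wdeg w (mmul u v) = wdeg w u + wdeg w v.
Proof. by rewrite /wdeg -big_split; apply: eq_bigr => i _; rewrite ffunE mulnDl. Qed.

Lemma leqif_wdeg w u v :
  (forall i, 0 < w i) -> mdvd u v -> wdeg w u <= wdeg w v ?= iff (u == v).
Proof.
move=> w_gt0 /mdvdP uv.
suff -> : (u == v) = [forall i, u i == v i].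
  apply: leqif_sum => i _; split; first by rewrite leq_mul2r uv orbT.
  by rewrite eqn_mul2r gtn_eqF.
by apply/eqP/forallP => [-> // | eq_uv]; apply/ffunP => i; apply/eqP.
Qed.

Lemma leqif_deg u v : mdvd u v -> deg u <= deg v ?= iff (u == v).
Proof.
have deg_wdeg x : deg x = wdeg (fun=> 1) x by apply: eq_bigr => i _; rewrite muln1.
by rewrite !deg_wdeg; apply: leqif_wdeg.
Qed.

Lemma mem_mingens T t :
  (t \in mingens T) = (t \in T) && ~~ has (fun s => (s != t) && mdvd s t) T.
Proof. by rewrite mem_filter mem_undup andbC. Qed.

Lemma mingens_subset T : {subset mingens T <= T}.
Proof. by move=> t; rewrite mem_mingens => /andP []. Qed.

Lemma mingens_mdvd T t : t \in T -> exists2 p, p \in mingens T & mdvd p t.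
Proof.
have [k] := ubnP (deg t); elim: k t => // k IHk t deg_t t_in.
have [/hasP [s s_in /andP [s_neq_t s_t]] | t_min] :=
  boolP (has (fun s => (s != t) && mdvd s t) T); last first.
  by exists t; rewrite ?mem_mingens ?t_in //; apply/mdvdP.
have deg_s : deg s < deg t by rewrite (ltn_leqif (leqif_deg s_t)) s_neq_t.
have [p p_min p_s] := IHk s (leq_trans deg_s deg_t) s_in.
by exists p => //; apply: mdvd_trans s_t.
Qed.

Definition mexp u l : mon n := [ffun i => l * u i].

Lemma wdeg_mexp w u l : wdeg w (mexp u l) = l * wdeg w u.
Proof. by rewrite /wdeg big_distrr; apply: eq_bigr => i _; rewrite ffunE -mulnA. Qed.

Lemma gpow_mexp (S : seq (mon n)) g l : g \in S -> mexp g l \in gpow S l.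
Proof.
move=> g_in; elim: l => [|l IHl] /=.
  by rewrite mem_seq1; apply/eqP/ffunP => i; rewrite !ffunE.
apply/allpairsPdep; exists g, (mexp g l); split => //.
by apply/ffunP => i; rewrite !ffunE mulSn.
Qed.

Lemma gpow_wdeg (S : seq (mon n)) w D :
  (forall g, g \in S -> D <= wdeg w g) -> forall l s, s \in gpow S l -> l * D <= wdeg w s.
Proof.
move=> S_ge; elim => [|l IHl] s /=; first by rewrite mul0n.
move=> /allpairsPdep [g [h [g_in h_in ->]]].
by rewrite wdeg_mmul mulSn leq_add ?S_ge ?IHl.
Qed.

Lemma gpow_mupow (S : seq (mon n)) (d : mon n) :
  (forall i, xpow i (d i) \in S) -> forall c, mupow d c \in gpow S (deg c).
Proof.
move=> pure_in c; have [k] := ubnP (deg c); elim: k c => // k IHk c deg_c.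
have [deg_c0 | ] := eqVneq (deg c) 0.
  rewrite deg_c0 mem_seq1; apply/eqP/ffunP => j; rewrite !ffunE.
  by move/eqP: deg_c0; rewrite sum_nat_eq0 => /forallP /(_ j) /eqP ->.
rewrite sum_nat_eq0 => /forallPn [i]; rewrite -lt0n => c_i.
have xi_c : mdvd (xpow i 1) c.
  by apply/mdvdP => j; rewrite ffunE; case: eqP => [->|].
have <- := mdivK xi_c; set c' := mdiv c (xpow i 1).
have deg_c' : deg c = (deg c').+1 by rewrite -(mdivK xi_c) deg_mmul deg_xpow addn1.
rewrite deg_mmul deg_xpow addn1 /= mupow_mmul mupow_xpow mul1n mmulC.
apply/allpairsPdep; exists (xpow i (d i)), (mupow d c'); split => //.
by apply: IHk; rewrite -ltnS -deg_c'.
Qed.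

Lemma in_box_mdvd d a m : in_box d a m -> mdvd (mupow d a) m.
Proof. by move=> /forallP box; apply/mdvdP => i; rewrite ffunE; case/andP: (box i). Qed.

Lemma in_box_mupow_succ d a (i : 'I_n) : in_box d a (mupow d (mmul a (xpow i 1))).
Proof.
apply/forallP => j; rewrite !ffunE.
by case: eqP => _; rewrite ?addn1 ?addn0 mulSn leq_addl ?leqnn.
Qed.

Lemma Ia_gens_colon S d a m :
  in_mideal (Ia_gens S d a) m -> in_mideal (gpow S (deg a).+1) (mmul m (mupow d a)).
Proof.
move=> /hasP [g /mapP [p]]; rewrite mem_filter => /andP [_ p_min] -> p_m.
by apply/hasP; exists p; rewrite -?mdvd_mdivl ?(mingens_subset p_min).
Qed.

(* wdeg (dweight d) u / (d_1 ... d_n) is the normalised degree sum_i u_i / d_i. *)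
Definition dweight (d : mon n) (i : 'I_n) : nat := \prod_(j | j != i) d j.

Lemma wdeg_mupow d c : wdeg (dweight d) (mupow d c) = (\prod_i d i) * deg c.
Proof.
rewrite /wdeg /deg big_distrr; apply: eq_bigr => i _.
by rewrite ffunE -mulnA (bigD1 i) //= [RHS]mulnC.
Qed.

End Monomials.

Section GoodIdeal.
Variables (n : nat) (S : seq (mon n)) (d : mon n).
Hypothesis goodSd : good S d.

Let D := \prod_i d i.

Lemma good_d_gt0 i : 0 < d i.
Proof. by case: (goodSd.1 i). Qed.

Lemma good_xpow_mem i : xpow i (d i) \in S.
Proof. by case: (goodSd.1 i) => _ /mingens_subset. Qed.

Lemma dweight_gt0 i : 0 < dweight d i.
Proof. by apply: prodn_gt0 => j; apply: good_d_gt0. Qed.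

Lemma good_wdeg_ge g : g \in S -> D <= wdeg (dweight d) g.
Proof.
move=> g_in; have [p p_min p_g] := mingens_mdvd (gpow_mexp D.+1 g_in).
have [b [deg_b box_b]] := goodSd.2 D.+1 isT p p_min.
have : D * D <= D.+1 * wdeg (dweight d) g.
  rewrite -wdeg_mexp -[X in _ * X]deg_b -wdeg_mupow.
  exact: (leqif_wdeg dweight_gt0 (mdvd_trans (in_box_mdvd box_b) p_g)).1.
by nia.
Qed.

Lemma good_mupow_mingens c : mupow d c \in mingens (gpow S (deg c)).
Proof.
rewrite mem_mingens (gpow_mupow good_xpow_mem) /=; apply/hasPn => s s_in.
apply/negP => /andP [s_neq s_c].
have := gpow_wdeg good_wdeg_ge s_in.
by rewrite mulnC -wdeg_mupow leqNgt (ltn_leqif (leqif_wdeg dweight_gt0 s_c)) s_neq.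
Qed.

Lemma colon_Ia_gens a m :
  in_mideal (gpow S (deg a).+1) (mmul m (mupow d a)) -> in_mideal (Ia_gens S d a) m.
Proof.
move=> /hasP [g g_in g_ma]; have [p p_min p_g] := mingens_mdvd g_in.
have p_ma := mdvd_trans p_g g_ma.
have [b [deg_b box_b]] := goodSd.2 (deg a).+1 isT p p_min.
have Ia_mem q : q \in mingens (gpow S (deg a).+1) -> in_box d a q ->
    mdvd q (mmul m (mupow d a)) -> in_mideal (Ia_gens S d a) m.
  move=> q_min box_q q_ma; apply/hasP; exists (mdiv q (mupow d a)).
    by apply/mapP; exists q; rewrite // mem_filter box_q.
  by rewrite mdvd_mdivl.
have [b_eq_a | b_neq_a] := eqVneq b a.
  by apply: Ia_mem p_min _ p_ma; rewrite -b_eq_a.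
have [i a_lt_b] : exists i, a i < b i.
  apply/existsP; apply: contraNT b_neq_a => /existsPn b_le_a.
  have b_a : mdvd b a by apply/mdvdP => i; rewrite leqNgt b_le_a.
  by rewrite -(leqif_deg b_a).2 deg_b.
have := good_mupow_mingens (mmul a (xpow i 1)).
rewrite deg_mmul deg_xpow addn1 => min_ai; apply: Ia_mem min_ai _ _.
  exact: in_box_mupow_succ.
apply/mdvdP => j; rewrite !ffunE; case: eqP => [-> | _]; last by rewrite addn0 leq_addl.
have /andP [b_p _] := forallP box_b i; have := mdvdP _ _ p_ma i; rewrite !ffunE.
have : (a i).+1 * d i <= b i * d i by rewrite leq_mul2r a_lt_b orbT.
lia.
Qed.

End GoodIdeal.

Theorem mainTheorem4 (n : nat) (S : seq (mon n)) (d : mon n) (a : mon n) :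
  good S d ->
  forall m : mon n,
    in_mideal (Ia_gens S d a) m =
    in_mideal (gpow S (deg a).+1) (mmul m (mupow d a)).
Proof.
move=> goodSd m; apply/idP/idP; first exact: Ia_gens_colon.
exact: colon_Ia_gens.
Qed.
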